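(* Let $r\in\mathbb{R}$. For all integers $n,k \geq 0$, \[ S_{2,r}(n,k) = \sum_{l=0}^k \binom{n}{l} r^l S_2(n-l,k-l). \]
   Context: $S_2(n,k)$ denotes the Stirling numbers of the second kind, given by $\frac{1}{k!}(e^t-1)^k = \sum_{n\ge k} S_2(n,k)\frac{t^n}{n!}$, with $S_2(a,b)=0$ whenever $a<b$ (and $\binom{n}{l}=0$ for $l>n$). For $r\in\mathbb{R}$ and integer $k\ge 0$, the extended Stirling numbers of the second kind $S_{2,r}(n,k)$ are defined by \[ \frac{1}{k!}(e^t-1+rt)^k = \sum_{n=k}^\infty S_{2,r}(n,k)\frac{t^n}{n!}, \] with $S_{2,r}(n,k)=0$ for $n<k$. *)

(* Exponential generating functions handled as formal power
   series: the coefficient of t^n in a power series with zero constant term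
   raised to the k-th power only depends on its coefficients of degree <= n,
   so we compute it with the degree-n truncation (a polynomial). *)
From mathcomp Require Import all_boot all_order all_algebra.
Set Implicit Arguments. Unset Strict Implicit. Unset Printing Implicit Defensive.
Import Order.TTheory GRing.Theory Num.Theory.
Local Open Scope ring_scope.

Definition trunc_series (R : ringType) (F : nat -> R) (N : nat) : {poly R} :=
  \poly_(i < N.+1) F i.

Definition fps_pow_coef (R : ringType) (F : nat -> R) (k n : nat) : R :=
  ((trunc_series F n) ^+ k)`_n.

Definition ext_series (R : fieldType) (r : R) (i : nat) : R :=
  (if i == 0%N then 0 else (i`!%:R)^-1) + (if i == 1%N then r else 0).

Definition exp_m1_series (R : fieldType) (i : nat) : R :=
  if i == 0%N then 0 else (i`!%:R)^-1.

(* (1/k!) (e^t - 1)^k = sum_n S_2(n,k) t^n/n! *)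
Definition stirling2 (R : fieldType) (n k : nat) : R :=
  n`!%:R / k`!%:R * fps_pow_coef (@exp_m1_series R) k n.

(* (1/k!) (e^t - 1 + r t)^k = sum_n S_{2,r}(n,k) t^n/n! *)
Definition ext_stirling2 (R : fieldType) (r : R) (n k : nat) : R :=
  n`!%:R / k`!%:R * fps_pow_coef (ext_series r) k n.

(* Split e^t - 1 + r t as (e^t - 1) + r t and expand its k-th power with the
   binomial theorem: the l-th term contributes C(k,l) r^l t^l (e^t - 1)^(k-l),
   whose coefficient of t^n is C(k,l) r^l times the coefficient of t^(n-l) in
   (e^t - 1)^(k-l).  Rescaling by n!/k! turns C(k,l) into C(n,l) (n-l)!/(k-l)!,
   which is exactly the normalisation of S_2(n-l, k-l). *)
From mathcomp Require Import all_boot all_order all_algebra.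
From mathcomp Require Import reals.
From mathcomp Require Import ring.
Import Order.TTheory GRing.Theory Num.Theory.
Local Open Scope ring_scope.

Lemma eq_coef_exprn (R : nzSemiRingType) (p q : {poly R}) (m : nat) :
    (forall i, (i <= m)%N -> p`_i = q`_i) ->
  forall j i, (i <= m)%N -> (p ^+ j)`_i = (q ^+ j)`_i.
Proof.
move=> eq_pq; elim=> [|j IHj] i le_im; first by rewrite !expr0.
rewrite !exprS !coefM; apply: eq_bigr => -[a /= lt_ai] _.
have le_am : (a <= m)%N by rewrite (leq_trans _ le_im) // -ltnS.
by rewrite eq_pq // IHj // (leq_trans (leq_subr _ _) le_im).
Qed.

Lemma fps_pow_coef_trunc (R : nzRingType) (F : nat -> R) (N k n : nat) :
  (n <= N)%N -> fps_pow_coef F k n = (trunc_series F N ^+ k)`_n.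
Proof.
move=> le_nN; apply: (@eq_coef_exprn _ _ _ n) => // i le_in.
by rewrite !coef_poly !ltnS le_in (leq_trans le_in le_nN).
Qed.

Lemma fps_pow_coef_addX (R : comNzRingType) (F : nat -> R) (r : R) (k n : nat) :
  fps_pow_coef (fun i => F i + (if i == 1%N then r else 0)) k n =
  \sum_(l < k.+1 | (l <= n)%N) 'C(k, l)%:R * r ^+ l * fps_pow_coef F (k - l) (n - l).
Proof.
set P := trunc_series F n.
have -> : fps_pow_coef (fun i => F i + (if i == 1%N then r else 0)) k n =
          ((P + r *: 'X) ^+ k)`_n.
  apply: (@eq_coef_exprn _ _ _ n) => // i le_in.
  by rewrite coefD coefZ coefX !coef_poly ltnS le_in; case: (i == 1%N); rewrite ?mulr1 ?mulr0.
rewrite exprDn coef_sum [RHS]big_mkcond /=; apply: eq_bigr => l _.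
rewrite coefMn exprZn -scalerAr coefZ coefMXn ltnNge.
case: leqP => [le_ln|_] /=; last by rewrite mulr0 mul0rn.
by rewrite -(@fps_pow_coef_trunc _ F n) ?leq_subr // mulr_natl mulrnAl.
Qed.

Lemma fact_ratio_bin (R : numFieldType) (n k l : nat) :
    (l <= k)%N -> (l <= n)%N ->
  n`!%:R / k`!%:R * 'C(k, l)%:R =
  'C(n, l)%:R * ((n - l)`!%:R / (k - l)`!%:R) :> R.
Proof.
move=> le_lk le_ln.
have fact_neq0 m : (m`!%:R : R) != 0 by rewrite pnatr_eq0 -lt0n fact_gt0.
rewrite -(bin_fact le_lk) -(bin_fact le_ln) !natrM.
have Ckl_neq0 : ('C(k, l)%:R : R) != 0 by rewrite pnatr_eq0 -lt0n bin_gt0.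
by field; rewrite Ckl_neq0 !fact_neq0.
Qed.

Theorem theorem2 (R : realType) (r : R) (n k : nat) :
  ext_stirling2 r n k =
  \sum_(l < k.+1) 'C(n, l)%:R * r ^+ l * stirling2 R (n - l) (k - l).
Proof.
rewrite /ext_stirling2 /ext_series fps_pow_coef_addX mulr_sumr big_mkcond /=.
apply: eq_bigr => -[l /= lt_lk] _; rewrite /stirling2.
case: leqP => [le_ln|lt_nl]; last by rewrite bin_small // !mul0r.
rewrite !mulrA fact_ratio_bin //; congr (_ * _).
by rewrite mulrAC !mulrA.
Qed.
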